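(* Let $A\in\mathbb{R}^{n\times n}$, let $W\in\mathbb{R}^{n\times n}$ be symmetric positive definite, let $C=\mathrm{diag}(C_{11},\dots,C_{nn})$ be diagonal positive definite and $V=\mathrm{diag}(\sigma_1^2,\dots,\sigma_n^2)$ with $\sigma_i>0$. Let $\Sigma\succ0$ be the solution of the discrete algebraic Riccati equation $\Sigma=A\Sigma A^T-A\Sigma C^T(C\Sigma C^T+V)^{-1}C\Sigma A^T+W$. Then $$\ln\det\Sigma\ge\ln\left[\frac{(\det A)^2}{\frac1n\left(\mathrm{tr}\,W^{-1}+\sum_{i=1}^n\frac{C_{ii}^2}{\sigma_i^2}\right)^n}+\det W\right].$$ *)

From mathcomp Require Import all_boot all_order all_algebra.
From mathcomp Require Import all_classical all_reals all_analysis.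
Set Implicit Arguments. Unset Strict Implicit. Unset Printing Implicit Defensive.
Import Order.TTheory GRing.Theory Num.Theory.
Local Open Scope ring_scope.

Definition posdef (R : realType) (n : nat) (M : 'M[R]_n) : Prop :=
  M^T = M /\ forall x : 'cV[R]_n, x != 0 -> 0 < (x^T *m M *m x) 0 0.

From mathcomp Require Import all_boot all_order all_algebra.
From mathcomp Require Import all_classical all_reals all_analysis.
From mathcomp Require Import complex spectral sesquilinear ring lra.
Import Order.TTheory GRing.Theory Num.Theory.
Set Implicit Arguments. Unset Strict Implicit. Unset Printing Implicit Defensive.
Local Open Scope ring_scope.

(* The Woodbury identity turns the Riccati equation into
     Sigma = A N^-1 A^T + W   with   N = Sigma^-1 + C^T V^-1 C.
   Minkowski's inequality det (X + Y) >= det X + det Y (X >= 0, Y > 0) then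
   gives det Sigma >= (det A)^2 / det N + det W, and AM-GM on the eigenvalues
   of N gives det N <= (tr N / n)^n.  Finally Sigma >= W implies
   Sigma^-1 <= W^-1, whence tr N <= tr W^-1 + sum_i C_ii^2 / sigma_i^2.
   Eigenvalue arguments use the complex spectral theorem: a real symmetric
   matrix is regarded as a Hermitian matrix over R[i]. *)

Lemma prod_addr1_ge (R : numDomainType) n (f : 'I_n.+1 -> R) :
  (forall i, 0 <= f i) -> 1 + \prod_i f i <= \prod_i (f i + 1).
Proof.
move=> f_ge0; rewrite !big_ord_recl mulrDl mul1r addrC.
have le_f_f1 i : 0 <= f i <= f i + 1 by rewrite f_ge0 lerDl ler01.
have le_1_f1 i : 0 <= (1 : R) <= f i + 1 by rewrite ler01 lerDr f_ge0.
apply: lerD; first by apply: ler_wpM2l => //; apply: ler_prod.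
by rewrite -[X in X <= _](@big1_eq R 1 *%R _ (index_enum 'I_n) xpredT) ler_prod.
Qed.

Lemma mulmx1_invmx (R : comUnitRingType) n (A B : 'M[R]_n) :
  A *m B = 1%:M -> invmx A = B.
Proof.
move=> AB1; have [uA _] := mulmx1_unit AB1.
by rewrite -[invmx A]mulmx1 -AB1 mulmxA mulVmx // mul1mx.
Qed.

Lemma invmx_diag (R : fieldType) n (d : 'rV[R]_n) :
  (forall i, d 0 i != 0) -> invmx (diag_mx d) = diag_mx (\row_i (d 0 i)^-1).
Proof.
move=> d_neq0; apply: mulmx1_invmx; rewrite mulmx_diag -diag_const_mx.
by congr diag_mx; apply/rowP => i; rewrite !mxE mulfV.
Qed.

Lemma diag_mx_qf (R : comPzSemiRingType) n (M : 'M[R]_n) i :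
  M i i = ((delta_mx i 0)^T *m M *m delta_mx i 0 : 'M[R]_1) 0 0.
Proof. by rewrite trmx_delta -rowE -colE !mxE. Qed.

Lemma woodbury (R : comUnitRingType) m n
    (S : 'M[R]_n) (C : 'M[R]_(m, n)) (V : 'M[R]_m) :
  S \in unitmx -> V \in unitmx -> C *m S *m C^T + V \in unitmx ->
  S - S *m C^T *m invmx (C *m S *m C^T + V) *m C *m S =
  invmx (invmx S + C^T *m invmx V *m C).
Proof.
move=> S_unit V_unit T_unit; symmetry; apply/mulmx1_invmx/mulmx1C.
set T := C *m S *m C^T + V; set P := S *m C^T.
have cross_term : P *m invmx T *m C *m S *m (C^T *m invmx V *m C) =
    P *m invmx V *m C - P *m invmx T *m C.
  have -> : P *m invmx T *m C *m S *m (C^T *m invmx V *m C) =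
      P *m (invmx T *m (T - V)) *m invmx V *m C.
    by rewrite addrK !mulmxA.
  rewrite mulmxBr mulVmx // mulmxBr mulmx1 !mulmxBl; congr (_ - _).
  by rewrite -!mulmxA mulKVmx.
rewrite mulmxDr !mulmxBl mulmxV // cross_term mulmxK // !mulmxA -/P.
by rewrite subKr subrK.
Qed.

Section HermitianMatrices.
Local Open Scope sesquilinear_scope.
Variable C : numClosedFieldType.

Definition hqf n (H : 'M[C]_n) (v : 'rV[C]_n) := (v *m H *m v ^t*) 0 0.
Definition hpsd n (H : 'M[C]_n) := H ^t* = H /\ forall v, 0 <= hqf H v.
Definition hpd n (H : 'M[C]_n) := H ^t* = H /\ forall v, v != 0 -> 0 < hqf H v.

Lemma trmxC_mul m n p (A : 'M[C]_(m, n)) (B : 'M[C]_(n, p)) :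
  (A *m B) ^t* = B ^t* *m A ^t*.
Proof. by rewrite trmx_mul map_mxM. Qed.

Lemma hpsd_congr m n (X : 'M[C]_n) (B : 'M[C]_(m, n)) :
  hpsd X -> hpsd (B *m X *m B ^t*).
Proof.
case=> hX X_ge0; split; first by rewrite !trmxC_mul trmxCK hX mulmxA.
by move=> v; rewrite /hqf !mulmxA -[_ *m B ^t* *m _]mulmxA -trmxC_mul X_ge0.
Qed.

Section Spectral.
Variables (n : nat) (H : 'M[C]_n).
Let P := spectralmx H.
Let d := spectral_diag H.

Lemma spectralmx_mul_tC : P *m P ^t* = 1%:M.
Proof. exact/unitarymxP/spectral_unitarymx. Qed.

Lemma spectralmx_tC_mul : P ^t* *m P = 1%:M.
Proof.
by rewrite -invmx_unitary ?spectral_unitarymx // mulVmx ?spectral_unit.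
Qed.

Lemma det_spectral_conj (M : 'M[C]_n) : \det (P ^t* *m M *m P) = \det M.
Proof.
by rewrite !det_mulmx mulrC mulrA -det_mulmx spectralmx_mul_tC det1 mul1r.
Qed.

Lemma spectral_row_neq0 i : row i P != 0.
Proof.
apply: contraPneq spectralmx_mul_tC => P0 /(congr1 (row i)).
rewrite row_mul P0 mul0mx row1 => /rowP /(_ i).
by rewrite !mxE !eqxx => /esym/eqP; rewrite oner_eq0.
Qed.

Hypothesis hH : H ^t* = H.

Lemma hermitian_spectralE : H = P ^t* *m diag_mx d *m P.
Proof.
have /orthomx_spectralP {1}-> : H \is normalmx.
  by apply: hermitian_normalmx; rewrite qualifE /= expr0 scale1r hH.
by rewrite invmx_unitary ?spectral_unitarymx.
Qed.

Lemma hqf_spectral_row i : hqf H (row i P) = d 0 i.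
Proof.
rewrite /hqf {1}hermitian_spectralE !mulmxA -row_mul spectralmx_mul_tC row1.
rewrite -rowE row_diag_mx -!scalemxAl -rowE rowE trmxC_mul mulmxA -rowE.
rewrite -row_mul spectralmx_mul_tC row1 trmx_delta.
rewrite map_delta_mx ?rmorph0 ?rmorph1 //.
by rewrite mul_delta_mx !mxE !eqxx mulr1.
Qed.

Lemma det_hermitian : \det H = \prod_i d 0 i.
Proof. by rewrite {1}hermitian_spectralE det_spectral_conj det_diag. Qed.

Lemma trace_hermitian : \tr H = \sum_i d 0 i.
Proof.
by rewrite {1}hermitian_spectralE mxtrace_mulC mulmxA spectralmx_mul_tC mul1mx
  mxtrace_diag.
Qed.

End Spectral.

Lemma hpsd_spectral_ge0 n (H : 'M[C]_n) i : hpsd H -> 0 <= spectral_diag H 0 i.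
Proof. by case=> hH H_ge0; rewrite -hqf_spectral_row. Qed.

Lemma hpd_spectral_gt0 n (H : 'M[C]_n) i : hpd H -> 0 < spectral_diag H 0 i.
Proof.
by case=> hH H_gt0; rewrite -hqf_spectral_row // H_gt0 // spectral_row_neq0.
Qed.

Lemma hpd_det_gt0 n (H : 'M[C]_n) : hpd H -> 0 < \det H.
Proof.
move=> H_pd; rewrite det_hermitian; last by case: H_pd.
by apply: prodr_gt0 => i _; apply: hpd_spectral_gt0.
Qed.

Lemma hpsd_det_le_AGM n (H : 'M[C]_n) :
  hpsd H -> \det H <= (n%:R^-1 * \tr H) ^+ n.
Proof.
move=> H_psd; have hH := H_psd.1; rewrite det_hermitian // trace_hermitian //.
have [+ _] := leif_AGM (A := predT) (fun i _ => hpsd_spectral_ge0 i H_psd).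
by rewrite card_ord mulrC.
Qed.

Lemma hpsd_det_add1 n (Z : 'M[C]_n.+1) :
  hpsd Z -> 1 + \det Z <= \det (Z + 1%:M).
Proof.
move=> Z_psd; have hZ := Z_psd.1.
set P := spectralmx Z; set d := spectral_diag Z.
have -> : Z + 1%:M = P ^t* *m (diag_mx d + 1%:M) *m P.
  by rewrite mulmxDr mulmxDl mulmx1 spectralmx_tC_mul -hermitian_spectralE.
have -> : diag_mx d + 1%:M = diag_mx (\row_i (d 0 i + 1)).
  by apply/matrixP => i j; rewrite !mxE -mulrnDl.
rewrite det_spectral_conj det_diag det_hermitian //.
under [X in _ <= X]eq_bigr do rewrite mxE.
by apply: prod_addr1_ge => i; apply: hpsd_spectral_ge0.
Qed.

Lemma hpd_factor n (Y : 'M[C]_n) :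
  hpd Y -> exists2 L, L \in unitmx & Y = L *m L ^t*.
Proof.
move=> Y_pd; have hY := Y_pd.1.
set P := spectralmx Y; set S := diag_mx (\row_i sqrtC (spectral_diag Y 0 i)).
have sqrt_gt0 i : 0 < sqrtC (spectral_diag Y 0 i).
  by rewrite sqrtC_gt0 hpd_spectral_gt0.
have SC : S ^t* = S.
  rewrite tr_diag_mx map_diag_mx; congr diag_mx; apply/rowP => i.
  by rewrite !mxE; apply: geC0_conj; rewrite ltW.
have SS : S *m S = diag_mx (spectral_diag Y).
  rewrite mulmx_diag; congr diag_mx.
  by apply/rowP => i; rewrite !mxE -expr2 sqrtCK.
exists (P ^t* *m S).
  rewrite unitmx_mul; apply/andP; split.
    by have [] := mulmx1_unit (spectralmx_tC_mul Y).
  rewrite unitmxE det_diag unitfE.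
  by apply/prodf_neq0 => i _; rewrite mxE gt_eqF.
by rewrite trmxC_mul trmxCK SC mulmxA -(mulmxA _ S S) SS -hermitian_spectralE.
Qed.

Lemma hpsd_hpd_detD n (X Y : 'M[C]_n.+1) :
  hpsd X -> hpd Y -> \det X + \det Y <= \det (X + Y).
Proof.
move=> X_psd Y_pd; have detY_gt0 := hpd_det_gt0 Y_pd.
have [L L_unit YE] := hpd_factor Y_pd.
have [Z Z_psd XE] : exists2 Z, hpsd Z & X = L *m Z *m L ^t*.
  exists (invmx L *m X *m (invmx L) ^t*); first exact: hpsd_congr.
  rewrite !mulmxA mulmxV // mul1mx -mulmxA -trmxC_mul mulmxV //.
  by rewrite trmx1 map_mx1 mulmx1.
have -> : X + Y = L *m (Z + 1%:M) *m L ^t*.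
  by rewrite YE mulmxDr mulmxDl mulmx1 -XE.
rewrite XE YE !det_mulmx in detY_gt0 *.
rewrite !(mulrAC _ _ (\det (L ^t*))) -{2}[_ * \det (L ^t*)]mulr1 -mulrDr.
by rewrite ler_pM2l // addrC hpsd_det_add1.
Qed.

End HermitianMatrices.

Section ComplexOfReal.
Variable R : rcfType.
Local Open Scope complex_scope.

Lemma sum_complex (I : finType) (f g : I -> R) :
  \sum_i (f i +i* g i) = (\sum_i f i) +i* (\sum_i g i).
Proof. by elim/big_rec3: _ => // i x y z _ ->. Qed.

Lemma mulc_real_conj (x y : R[i]) (r : R) :
  x * r%:C * y^* =
  (r * (complex.Re x * complex.Re y + complex.Im x * complex.Im y)) +i*
  (r * (complex.Im x * complex.Re y - complex.Re x * complex.Im y)).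
Proof.
case: x => a b; case: y => c d /=.
by apply/eqP; rewrite eq_complex /=; apply/andP; split; apply/eqP; ring.
Qed.

Local Open Scope sesquilinear_scope.
Local Notation rc := (real_complex R).

Lemma hqf_map_sym n (M : 'M[R]_n) (v : 'rV[R[i]]_n) : M^T = M ->
  hqf (map_mx rc M) v =
  ((map_mx (@complex.Re R) v *m M *m (map_mx (@complex.Re R) v)^T) 0 0
   + (map_mx (@complex.Im R) v *m M *m (map_mx (@complex.Im R) v)^T) 0 0)%:C.
Proof.
move=> M_sym; have MC j k : M k j = M j k by rewrite -[in LHS]M_sym mxE.
rewrite /hqf !mxE.
under eq_bigr do rewrite !mxE mulr_suml.
under eq_bigr do under eq_bigr do rewrite !mxE mulc_real_conj.
under eq_bigr do rewrite sum_complex.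
rewrite sum_complex -big_split /=; congr Complex.
  apply: eq_bigr => k _; rewrite !mxE !mulr_suml -big_split.
  by apply: eq_bigr => j _; rewrite !mxE /=; ring.
(* The imaginary part is antisymmetric in (j, k), so it vanishes. *)
under eq_bigr do (under eq_bigr do rewrite mulrBr; rewrite sumrB).
rewrite sumrB exchange_big; apply/eqP; rewrite subr_eq0; apply/eqP.
by apply: eq_bigr => k _; apply: eq_bigr => j _; rewrite MC; ring.
Qed.

End ComplexOfReal.

Definition possemidef (R : realType) (n : nat) (M : 'M[R]_n) : Prop :=
  M^T = M /\ forall x : 'cV[R]_n, 0 <= (x^T *m M *m x) 0 0.

Section RealSymmetric.
Variable R : realType.
Local Notation rc := (real_complex R).
Local Open Scope complex_scope.
Local Open Scope sesquilinear_scope.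

Lemma hermitian_map_sym n (M : 'M[R]_n) :
  M^T = M -> (map_mx rc M) ^t* = map_mx rc M.
Proof.
move=> M_sym; rewrite map_trmx M_sym; apply/matrixP => i j; rewrite !mxE.
exact: conjc_real.
Qed.

Lemma possemidef_map n (M : 'M[R]_n) : possemidef M -> hpsd (map_mx rc M).
Proof.
case=> M_sym M_ge0; split; first exact: hermitian_map_sym.
have qf_ge0 (w : 'rV[R]_n) : 0 <= (w *m M *m w^T) 0 0.
  by have := M_ge0 w^T; rewrite trmxK.
by move=> v; rewrite hqf_map_sym // ler0c addr_ge0.
Qed.

Lemma posdef_semi n (M : 'M[R]_n) : posdef M -> possemidef M.
Proof.
case=> M_sym M_gt0; split => // x; have [->|/M_gt0/ltW //] := eqVneq x 0.
by rewrite mulmx0 mxE.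
Qed.

Lemma posdef_map n (M : 'M[R]_n) : posdef M -> hpd (map_mx rc M).
Proof.
move=> M_pd; have [M_sym M_gt0] := M_pd; split; first exact: hermitian_map_sym.
have qf_ge0 (w : 'rV[R]_n) : 0 <= (w *m M *m w^T) 0 0.
  by have := (posdef_semi M_pd).2 w^T; rewrite trmxK.
have qf_gt0 (w : 'rV[R]_n) : w != 0 -> 0 < (w *m M *m w^T) 0 0.
  by move=> w0; have := M_gt0 w^T; rewrite trmxK; apply; rewrite trmx_eq0.
move=> v v0; rewrite hqf_map_sym // ltcR.
have [Re0|/qf_gt0 Re_gt0] := eqVneq (map_mx (@complex.Re R) v) 0; last first.
  by rewrite ltr_pwDl.
have [Im0|/qf_gt0 Im_gt0] := eqVneq (map_mx (@complex.Im R) v) 0; last first.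
  by rewrite ltr_wpDl.
move: v0; apply: contraNP => _; apply/eqP/matrixP => i j.
have /matrixP/(_ i j) := Re0; have /matrixP/(_ i j) := Im0; rewrite !mxE.
by case: (v i j) => a b /= -> ->.
Qed.

Lemma posdef_det_gt0 n (M : 'M[R]_n) : posdef M -> 0 < \det M.
Proof. by move=> /posdef_map/hpd_det_gt0; rewrite det_map_mx ltcR. Qed.

Lemma possemidef_det_le_AGM n (M : 'M[R]_n) :
  possemidef M -> \det M <= (n%:R^-1 * \tr M) ^+ n.
Proof.
move=> /possemidef_map/hpsd_det_le_AGM; rewrite det_map_mx.
have -> : \tr (map_mx rc M) = (\tr M)%:C.
  by rewrite /mxtrace rmorph_sum; apply: eq_bigr => i _; rewrite mxE.
by rewrite -(rmorph_nat rc) -fmorphV -!rmorphM -rmorphXn lecR.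
Qed.

Lemma possemidef_posdef_detD n (X Y : 'M[R]_n) : (0 < n)%N ->
  possemidef X -> posdef Y -> \det X + \det Y <= \det (X + Y).
Proof.
case: n X Y => // n X Y _ /possemidef_map X_psd /posdef_map Y_pd.
by have := hpsd_hpd_detD X_psd Y_pd; rewrite -map_mxD !det_map_mx -rmorphD lecR.
Qed.

End RealSymmetric.

Section PositiveMatrices.
Variables (R : realType) (n : nat).
Implicit Types (A M N W X Y : 'M[R]_n) (x y : 'cV[R]_n).

Lemma possemidef_posdef_add X Y : possemidef X -> posdef Y -> posdef (X + Y).
Proof.
case=> X_sym X_ge0 [Y_sym Y_gt0].
split; first by rewrite linearD /= X_sym Y_sym.
move=> x x0; rewrite mulmxDr mulmxDl mxE.
exact: ltr_wpDl (X_ge0 x) (Y_gt0 x x0).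
Qed.

Lemma possemidef_congr m M (B : 'M[R]_(m, n)) :
  possemidef M -> possemidef (B *m M *m B^T).
Proof.
case=> M_sym M_ge0; split; first by rewrite !trmx_mul trmxK M_sym mulmxA.
by move=> x; have := M_ge0 (B^T *m x); rewrite trmx_mul trmxK !mulmxA.
Qed.

Lemma posdef_unit M : posdef M -> M \in unitmx.
Proof. by move=> /posdef_det_gt0 det_gt0; rewrite unitmxE unitfE gt_eqF. Qed.

Lemma posdef_inv M : posdef M -> posdef (invmx M).
Proof.
move=> M_pd; have M_unit := posdef_unit M_pd; case: M_pd => M_sym M_gt0.
split; first by rewrite trmx_inv M_sym.
move=> x x0; have y0 : invmx M *m x != 0.
  by apply: contra_neq x0 => /(congr1 (mulmx M)); rewrite mulKVmx // mulmx0.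
have := M_gt0 _ y0; rewrite trmx_mul trmx_inv M_sym -!mulmxA mulKVmx // mulmxA.
Qed.

Lemma posdef_diag (d : 'rV[R]_n) : (forall i, 0 < d 0 i) -> posdef (diag_mx d).
Proof.
move=> d_gt0; split; first exact: tr_diag_mx.
move=> x /eqP x0; rewrite mul_mx_diag mxE.
have [k xk0] : exists k, x k 0 != 0.
  apply/not_existsP => x_eq0; apply/x0/matrixP => i j.
  by rewrite ord1 mxE; apply/eqP/negPn/negP/x_eq0.
rewrite (bigD1 k) //= ltr_pwDl //.
  by rewrite !mxE mulrAC -expr2 mulr_gt0 ?exprn_even_gt0.
by apply: sumr_ge0 => i _; rewrite !mxE mulrAC -expr2 mulr_ge0 ?sqr_ge0 ?ltW.
Qed.

Lemma possemidef_diag_ge0 M i : possemidef M -> 0 <= M i i.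
Proof.
by case=> _ M_ge0; rewrite diag_mx_qf.
Qed.

Lemma possemidef_det_le_trace_bound M t : possemidef M -> \tr M <= t ->
  \det M <= (n%:R^-1 * t) ^+ n.
Proof.
move=> M_psd trM_le; apply: le_trans (possemidef_det_le_AGM M_psd) _.
have trM_ge0 : 0 <= \tr M by apply: sumr_ge0 => i _; apply: possemidef_diag_ge0.
have inv_n_ge0 : 0 <= n%:R^-1 :> R by rewrite invr_ge0 ler0n.
apply: lerXn2r; rewrite ?nnegrE ?ler_wpM2l ?mulr_ge0 //.
exact: le_trans trM_le.
Qed.

Lemma det_congr_invmx_addr_ge A N W : (0 < n)%N -> posdef N -> posdef W ->
  \det A ^+ 2 / \det N + \det W <= \det (A *m invmx N *m A^T + W).
Proof.
move=> n_gt0 N_pd W_pd; apply: le_trans (possemidef_posdef_detD n_gt0 _ W_pd).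
  by rewrite !det_mulmx det_tr det_inv expr2 mulrAC.
exact/possemidef_congr/posdef_semi/posdef_inv.
Qed.

Lemma posdef_qf_invmx_ge W x y : posdef W ->
  2 * (x^T *m y) 0 0 - (x^T *m W *m x) 0 0 <= (y^T *m invmx W *m y) 0 0.
Proof.
move=> W_pd; have W_unit := posdef_unit W_pd; have [W_sym _] := W_pd.
set w := invmx W *m y.
have Ww : W *m w = y by rewrite mulKVmx.
have wW : w^T *m W = y^T by rewrite -{1}W_sym -trmx_mul Ww.
have := (posdef_semi W_pd).2 (x - w).
rewrite !linearB /= !mulmxBl wW -(mulmxA _ W w) Ww /w mulmxA.
rewrite -!trace_mx11 !linearB /= -[\tr (y^T *m x)]mxtrace_tr trmx_mul trmxK.
lra.
Qed.

Lemma qf_invmx_addl_le X W y : possemidef X -> posdef W ->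
  (y^T *m invmx (X + W) *m y) 0 0 <= (y^T *m invmx W *m y) 0 0.
Proof.
move=> X_psd W_pd; have S_pd := possemidef_posdef_add X_psd W_pd.
have [S_sym _] := S_pd; set S := X + W in S_pd S_sym *.
set u := invmx S *m y.
have Su : S *m u = y by rewrite mulKVmx // posdef_unit.
have uy : (u^T *m y) 0 0 = (y^T *m invmx S *m y) 0 0.
  by rewrite -!trace_mx11 -mxtrace_tr trmx_mul trmxK /u mulmxA.
have uSu : (u^T *m S *m u) 0 0 = (y^T *m invmx S *m y) 0 0.
  by rewrite -mulmxA Su.
(* y^T S^-1 y = 2 u^T y - u^T S u <= 2 u^T y - u^T W u <= y^T W^-1 y *)
apply: le_trans (posdef_qf_invmx_ge u y W_pd).
have := X_psd.2 u; move: uSu; rewrite /S mulmxDr mulmxDl mxE uy.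
lra.
Qed.

Lemma trace_invmx_addl_le X W : possemidef X -> posdef W ->
  \tr (invmx (X + W)) <= \tr (invmx W).
Proof.
move=> X_psd W_pd; apply: ler_sum => i _.
(* [diag_mx_qf] is instantiated: its right side is again a diagonal entry. *)
rewrite (diag_mx_qf (invmx (X + W))) (diag_mx_qf (invmx W)).
exact: qf_invmx_addl_le.
Qed.

End PositiveMatrices.

Theorem theorem5 (R : realType) (n : nat) (hn : (0 < n)%N)
  (A W Sigma : 'M[R]_n) (c sigma : 'rV[R]_n)
  (hW : posdef W)
  (hc : forall i, 0 < c 0 i)
  (hsigma : forall i, 0 < sigma 0 i)
  (hSigma : posdef Sigma)
  (hDARE : let C := diag_mx c in
           let V := diag_mx (\row_i (sigma 0 i ^+ 2)) in
           Sigma = A *m Sigma *m A^T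
                   - A *m Sigma *m C^T *m invmx (C *m Sigma *m C^T + V)
                       *m C *m Sigma *m A^T
                   + W) :
  ln (\det Sigma) >=
  ln ((\det A) ^+ 2 /
        ((n%:R)^-1 * (\tr (invmx W)
                      + \sum_(i < n) (c 0 i) ^+ 2 / (sigma 0 i) ^+ 2)) ^+ n
      + \det W).
Proof.
move: hDARE => /=; set C := diag_mx c; set V := diag_mx _ => DARE.
have sigma2_gt0 i : 0 < sigma 0 i ^+ 2 by rewrite exprn_gt0.
have V_pd : posdef V by apply: posdef_diag => i; rewrite mxE.
set N := invmx Sigma + C^T *m invmx V *m C.
have CVC : C^T *m invmx V *m C = diag_mx (\row_i (c 0 i ^+ 2 / sigma 0 i ^+ 2)).
  rewrite invmx_diag => [|i]; last by rewrite mxE gt_eqF.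
  rewrite tr_diag_mx !mulmx_diag; congr diag_mx.
  by apply/rowP => i; rewrite !mxE; ring.
have N_pd : posdef N.
  apply: possemidef_posdef_add; first exact/posdef_semi/posdef_inv.
  by rewrite CVC; apply: posdef_diag => i; rewrite mxE divr_gt0 ?exprn_gt0.
have SigmaE : Sigma = A *m invmx N *m A^T + W.
  have T_pd : posdef (C *m Sigma *m C^T + V).
    exact/possemidef_posdef_add/V_pd/possemidef_congr/posdef_semi.
  rewrite {1}DARE -woodbury ?posdef_unit //; congr (_ + _).
  by rewrite mulmxBr mulmxBl !mulmxA.
have trN_le : \tr N <= \tr (invmx W) + \sum_i c 0 i ^+ 2 / sigma 0 i ^+ 2.
  rewrite mxtraceD CVC mxtrace_diag lerD ?SigmaE ?trace_invmx_addl_le //.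
    exact/possemidef_congr/posdef_semi/posdef_inv.
  by under eq_bigr do rewrite mxE.
have detN_le := possemidef_det_le_trace_bound (posdef_semi N_pd) trN_le.
have Q_gt0 := lt_le_trans (posdef_det_gt0 N_pd) detN_le.
rewrite ler_ln ?posrE ?posdef_det_gt0 //; last first.
  by rewrite ltr_wpDl ?posdef_det_gt0 ?divr_ge0 ?sqr_ge0 ?ltW.
rewrite [in X in _ <= X]SigmaE.
apply: le_trans (det_congr_invmx_addr_ge _ hn N_pd hW).
by rewrite lerD2r ler_wpM2l ?sqr_ge0 // lef_pV2 ?posrE ?posdef_det_gt0.
Qed.
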